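(* Fix a positive integer $k$ and a real number $\epsilon > 0$. Then all but finitely many numerical semigroups $\Lambda$ with $e(\Lambda) = k$ satisfy $c(\Lambda) > 0$ and \[ \frac{c'(\Lambda)}{c(\Lambda)} > \frac{1}{k} - \epsilon. \]
   Context: A numerical semigroup is a subset $\Lambda \subseteq \mathbb{Z}_{\ge 0}$ that contains $0$, is closed under addition, and has finite complement in $\mathbb{Z}_{\ge 0}$. Every numerical semigroup has a unique minimal (with respect to inclusion) generating set, which is finite; its size is the embedding dimension $e(\Lambda)$. The conductor is $c(\Lambda) = \max(\mathbb{Z}_{\ge 0}\setminus\Lambda) + 1$ (with $c(\Lambda)=0$ if $\Lambda = \mathbb{Z}_{\ge 0}$). Define $c'(\Lambda) = |\{\lambda \in \Lambda : \lambda < c(\Lambda)\}|$. *)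

From mathcomp Require Import all_boot.
Set Implicit Arguments. Unset Strict Implicit. Unset Printing Implicit Defensive.

Definition numerical_semigroup (S : nat -> bool) : Prop :=
  S 0 /\ (forall a b, S a -> S b -> S (a + b)) /\
  (exists N, forall n, N <= n -> S n).

Definition in_span (G : seq nat) (n : nat) : Prop :=
  exists c : seq nat, size c = size G /\
    n = \sum_(i < size G) nth 0 c i * nth 0 G i.

Definition generates (G : seq nat) (S : nat -> bool) : Prop :=
  forall n, S n <-> in_span G n.

Definition minimal_generating_set (G : seq nat) (S : nat -> bool) : Prop :=
  uniq G /\ generates G S /\
  (forall G' : seq nat, {subset G' <= G} -> generates G' S -> {subset G <= G'}).

Definition embedding_dimension_is (S : nat -> bool) (k : nat) : Prop :=
  exists G : seq nat, minimal_generating_set G S /\ size G = k.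

(* c is the conductor of S: max(N \ S) + 1, or 0 if S = N. *)
Definition is_conductor (S : nat -> bool) (c : nat) : Prop :=
  (forall m, c <= m -> S m) /\ (0 < c -> ~~ S c.-1).

Definition cprime (S : nat -> bool) (c : nat) : nat := count S (iota 0 c).

From mathcomp Require Import all_boot.
From mathcomp Require Import zify.
From Stdlib Require Import Reals Lra Psatz.
From Stdlib Require Import IndefiniteDescription.
(* Stdlib's Reals rebinds [^] on nat; reinstate ssrnat's notations. *)
Import ssrnat.
Set Implicit Arguments. Unset Strict Implicit. Unset Printing Implicit Defensive.

(* Let S be a numerical semigroup generated by a list G of k numbers, let m be
   its multiplicity (least positive generator) and c its conductor.  For each
   residue r mod m let w(r) be the Apery element: the least element of S that
   is congruent to r.  Then w(r) < c + m, and a summand of an Apery element is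
   again an Apery element.  Writing w(r) = sum_i x_i(r) g_i and removing copies
   of g_i one at a time therefore yields x_i(r) distinct Apery elements, all
   above w(r); counting these gives sum_r x_i(r) g_i <= sum_r (c + m - w(r)).
   Since m itself never occurs in an Apery representation, summing over the
   k - 1 other generators gives sum_r w(r) <= (k-1) sum_r (c + m - w(r)),
   while the elements w(r) + j m below c show c' >= sum_r (c - w(r)) / m.
   Together these yield c <= k c' + 2 k m (Lemma conductor_le).  Injectivity
   of r |-> (bounded) coefficient vector gives m <= ((c + m)/m + 1)^k
   (Lemma mult_le_pow), so m is o(c) as c grows; the finitely many semigroups
   of small conductor are the exceptions, and for the others c'/c > 1/k - eps. *)

Definition index_pairs (m : nat) (a : nat -> nat) (j0 : nat) : seq (nat * nat) :=
  [seq (r, j) | r <- iota 0 m, j <- iota j0 (a r)].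

Lemma mem_index_pairs m a j0 r j :
  ((r, j) \in index_pairs m a j0) = (r < m) && (j0 <= j < j0 + a r).
Proof.
apply/allpairsPdep/andP => [[r' [j' [hr hj [-> ->]]]]|[hr hj]].
  by move: hr hj; rewrite !mem_iota.
by exists r, j; rewrite !mem_iota.
Qed.

Lemma size_index_pairs m a j0 : size (index_pairs m a j0) = \sum_(r < m) a r.
Proof.
rewrite size_allpairs_dep sumnE big_map -(big_mkord xpredT) /index_iota subn0.
by apply: eq_bigr => r _; rewrite size_iota.
Qed.

Lemma uniq_index_pairs m a j0 : uniq (index_pairs m a j0).
Proof.
apply: allpairs_uniq_dep; [exact: iota_uniq | by move=> r _; apply: iota_uniq |].
by move=> [r1 j1] [r2 j2] _ _ /= [-> ->].
Qed.

Lemma sum_le_size_inj (T : eqType) m a j0 (f : nat * nat -> T) (t : seq T) :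
  {in index_pairs m a j0 &, injective f} ->
  (forall r j, r < m -> j0 <= j < j0 + a r -> f (r, j) \in t) ->
  \sum_(r < m) a r <= size t.
Proof.
move=> f_inj f_into; rewrite -(size_index_pairs m a j0) -(size_map f).
apply: uniq_leq_size; first by rewrite map_inj_in_uniq ?uniq_index_pairs.
move=> z /mapP [[r j] hrj ->]; move: hrj; rewrite mem_index_pairs => /andP [hr hj].
exact: f_into.
Qed.

(* Throughout, S is an additive set generated by G (of size k) containing
   every n >= c; no minimality of G or exactness of c is needed. *)
Section AperySet.

Variables (S : nat -> bool) (G : seq nat) (c : nat).
Hypothesis S_add : forall a b, S a -> S b -> S (a + b).
Hypothesis S_gen : generates G S.
Hypothesis S_ge_c : forall n, c <= n -> S n.

Local Notation k := (size G).

Lemma S_comb (x : seq nat) : S (\sum_(i < k) nth 0 x i * nth 0 G i).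
Proof.
apply/S_gen; exists (mkseq (nth 0 x) k); rewrite size_mkseq; split=> //.
by apply: eq_bigr => i _; rewrite nth_mkseq.
Qed.

Lemma S_mul_gen (i : 'I_k) j : S (j * nth 0 G i).
Proof.
have := S_comb (mkseq (fun l => if l == i then j else 0) k).
rewrite (bigD1 i) //= big1 ?addn0 ?nth_mkseq ?eqxx // => l /negbTE hl.
by rewrite nth_mkseq // (hl : (l == i :> nat) = false) mul0n.
Qed.

(* Some generator is positive, since S contains c + 1. *)
Lemma exists_pos_gen : exists n, (0 < n) && (n \in G).
Proof.
case: (boolP (has (fun n => 0 < n) G)) => [/hasP [n nG np]|/hasPn noPos].
  by exists n; rewrite np nG.
have /S_gen [x [_]] := S_ge_c (leqnSn c).
rewrite big1 // => i _.
by have /noPos := mem_nth 0 (ltn_ord i); rewrite lt0n negbK => /eqP ->; rewrite muln0.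
Qed.

Definition multiplicity : nat := ex_minn exists_pos_gen.
Local Notation m := multiplicity.

Lemma multP : [/\ 0 < m, m \in G & forall n, 0 < n -> n \in G -> m <= n].
Proof.
rewrite /m; case: ex_minnP => n /andP [np nG] nmin; split=> // n' n'0 n'G.
by apply: nmin; rewrite n'0 n'G.
Qed.

Lemma mult_gt0 : 0 < m. Proof. by case: multP. Qed.
Lemma mult_in_G : m \in G. Proof. by case: multP. Qed.

Definition mult_idx : 'I_k := Ordinal (etrans (index_mem m G) mult_in_G).

Lemma nth_mult_idx : nth 0 G mult_idx = m.
Proof. by rewrite /= nth_index // mult_in_G. Qed.

(* Every residue class mod m meets S (at c m + r mod m). *)
Lemma exists_in_class r : exists n, S n && (n %% m == r %% m).
Proof.
exists (c * m + r %% m); rewrite modnMDl modn_mod eqxx andbT.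
by apply: S_ge_c; rewrite (leq_trans _ (leq_addr _ _)) // leq_pmulr // mult_gt0.
Qed.

Definition apery (r : nat) : nat := ex_minn (exists_in_class r).

Lemma aperyP r : [/\ S (apery r), apery r %% m = r %% m &
  forall n, S n -> n %% m = r %% m -> apery r <= n].
Proof.
rewrite /apery; case: ex_minnP => n /andP [Sn /eqP nm] nmin; split=> // n' h1 h2.
by apply: nmin; rewrite h1 h2 eqxx.
Qed.

Lemma apery_in r : S (apery r). Proof. by case: (aperyP r). Qed.
Lemma apery_mod r : apery r %% m = r %% m. Proof. by case: (aperyP r). Qed.
Lemma apery_min r n : S n -> n %% m = r %% m -> apery r <= n.
Proof. by case: (aperyP r) => _ _; apply. Qed.

Lemma apery_inj r1 r2 : r1 < m -> r2 < m -> apery r1 = apery r2 -> r1 = r2.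
Proof.
move=> h1 h2 e; rewrite -(modn_small h1) -(modn_small h2).
by rewrite -apery_mod e apery_mod.
Qed.

(* Apery elements lie below c + m: otherwise w(r) - m >= c would be a smaller
   element of S in the same class. *)
Lemma apery_lt r : apery r < c + m.
Proof.
rewrite ltnNge; apply/negP => big.
have hm : m <= apery r by apply: leq_trans big; apply: leq_addl.
have : apery r <= apery r - m.
  apply: apery_min; first by apply: S_ge_c; rewrite leq_subRL // addnC.
  by rewrite -(apery_mod r) -{2}(subnK hm) modnDr.
by rewrite leqNgt ltn_subrL mult_gt0 (leq_trans mult_gt0 hm).
Qed.

Lemma apery_summand r v s :
  S v -> S s -> apery r = v + s -> apery (v %% m) = v.
Proof.
move=> Sv Ss e; apply/eqP; rewrite eqn_leq apery_min ?modn_mod //=.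
rewrite leqNgt; apply/negP => lt_av.
have : apery r <= apery (v %% m) + s.
  apply: apery_min; first by apply: S_add => //; apply: apery_in.
  by rewrite -(apery_mod r) e -modnDml apery_mod modn_mod modnDml.
by rewrite leqNgt e ltn_add2r lt_av.
Qed.

Definition rep (r : nat) : seq nat :=
  proj1_sig (constructive_indefinite_description _ (proj1 (S_gen _) (apery_in r))).

Lemma rep_sum r : apery r = \sum_(i < k) nth 0 (rep r) i * nth 0 G i.
Proof.
by case: (proj2_sig (constructive_indefinite_description _
                      (proj1 (S_gen _) (apery_in r)))).
Qed.

Lemma rep_split r (i : 'I_k) j : j <= nth 0 (rep r) i ->
  exists2 v, S v & apery r = v + j * nth 0 G i.
Proof.
move=> hj.
pose y := mkseq (fun l => if l == i then nth 0 (rep r) l - j else nth 0 (rep r) l) k.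
exists (\sum_(l < k) nth 0 y l * nth 0 G l); first exact: S_comb.
rewrite rep_sum (bigD1 i) //= [in RHS](bigD1 i) //= nth_mkseq // eqxx.
rewrite [RHS]addnAC -mulnDl subnK //; congr (_ + _).
by apply: eq_bigr => l /negbTE hl; rewrite nth_mkseq // (hl : (l == i :> nat) = false).
Qed.

Lemma apery_sub r (i : 'I_k) j : j <= nth 0 (rep r) i ->
  j * nth 0 G i <= apery r /\
  apery ((apery r - j * nth 0 G i) %% m) = apery r - j * nth 0 G i.
Proof.
move=> /rep_split [v Sv e]; rewrite e addnK leq_addl; split=> //.
exact: apery_summand Sv (S_mul_gen _ _) e.
Qed.

(* The multiplicity never occurs in the representation of an Apery element,
   since w(r) - m would be a smaller element of the same class. *)
Lemma rep_mult_zero r : r < m -> nth 0 (rep r) mult_idx = 0.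
Proof.
move=> r_lt; apply/eqP; rewrite -leqn0 leqNgt; apply/negP => h.
have [le_m_ap ap_sub] := apery_sub h.
rewrite nth_mult_idx mul1n in le_m_ap ap_sub.
have class : (apery r - m) %% m = r.
  by rewrite -[RHS](modn_small r_lt) -(apery_mod r) -{2}(subnK le_m_ap) modnDr.
have : apery r - m < apery r by rewrite ltn_subrL mult_gt0 (leq_trans mult_gt0 le_m_ap).
by rewrite -ap_sub class ltnn.
Qed.

(* For 1 <= j <= x_i(r), w(r) - j g_i is the Apery element w(r') of some class
   r', with j g_i <= c + m - w(r'); as (r, j) |-> (r', j) is injective,
   sum_r x_i(r) <= sum_r' (c + m - w(r')) / g_i. *)
Lemma gen_coeff_bound (i : 'I_k) :
  \sum_(r < m) nth 0 (rep r) i * nth 0 G i <= \sum_(r < m) (c + m - apery r).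
Proof.
set g := nth 0 G i; have [g0 | g_gt0] := posnP g.
  by rewrite big1 // => r _; rewrite g0 muln0.
apply: (@leq_trans (\sum_(r < m) (c + m - apery r) %/ g * g)); last first.
  by apply: leq_sum => r _; apply: leq_divM.
rewrite -!big_distrl /= leq_mul2r; apply/orP; right.
rewrite -(size_index_pairs m (fun r => (c + m - apery r) %/ g) 1).
apply: (@sum_le_size_inj _ m (fun r => nth 0 (rep r) i) 1
          (fun p => ((apery p.1 - p.2 * g) %% m, p.2))).
- move=> [r1 j1] [r2 j2]; rewrite !mem_index_pairs !add1n ltnS.
  move=> /andP [lt1 /andP [_ hj1]] /andP [lt2 /andP [_ hj2]] /= [e1 e2]; subst j2.
  have [le1 ap1] := apery_sub hj1; have [le2 ap2] := apery_sub hj2.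
  have e : apery r1 - j1 * g = apery r2 - j1 * g by rewrite -ap1 -ap2 e1.
  by rewrite (apery_inj lt1 lt2) // -(subnK le1) e subnK.
- move=> r j lt_r; rewrite add1n ltnS => /andP [j_gt0 hj] /=.
  have [le_ap ap_sub] := apery_sub hj.
  rewrite mem_index_pairs ltn_mod mult_gt0 j_gt0 add1n ltnS leq_divRL // ap_sub.
  rewrite leq_subRL; last exact: leq_trans (leq_subr _ _) (ltnW (apery_lt r)).
  by rewrite (subnK le_ap) (ltnW (apery_lt r)).
Qed.

Lemma apery_sum_le : \sum_(r < m) apery r <= k.-1 * \sum_(r < m) (c + m - apery r).
Proof.
rewrite (eq_bigr _ (fun (r : 'I_m) _ => rep_sum r)) exchange_big /=.
rewrite (bigD1 mult_idx) //= big1; last first.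
  by move=> r _; rewrite rep_mult_zero.
rewrite add0n.
apply: (@leq_trans (\sum_(i < k | i != mult_idx) \sum_(r < m) (c + m - apery r))).
  by apply: leq_sum => i _; apply: gen_coeff_bound.
by rewrite sum_nat_cond_const cardsE cardC1 card_ord.
Qed.

(* The elements w(r) + j m of S below c are distinct for distinct (r, j). *)
Lemma apery_count_le : \sum_(r < m) (c - apery r) %/ m <= count S (iota 0 c).
Proof.
rewrite -size_filter.
apply: (@sum_le_size_inj _ m (fun r => (c - apery r) %/ m) 0
          (fun p => apery p.1 + p.2 * m)).
- move=> [r1 j1] [r2 j2]; rewrite !mem_index_pairs /= => /andP [lt1 _] /andP [lt2 _] e.
  have er : r1 = r2.
    have : (apery r1 + j1 * m) %% m = (apery r2 + j2 * m) %% m by rewrite e.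
    by rewrite ![apery _ + _]addnC !modnMDl !apery_mod !modn_small.
  subst r2; move/addnI: e => /eqP; rewrite eqn_pmul2r ?mult_gt0 // => /eqP -> //.
- move=> r j _; rewrite add0n => /andP [_ hj] /=.
  rewrite mem_filter mem_iota add0n S_add ?apery_in //=; last first.
    by rewrite -nth_mult_idx S_mul_gen.
  have : j.+1 * m <= c - apery r by rewrite -leq_divRL ?mult_gt0.
  by rewrite mulSn; lia.
Qed.

(* The key inequality c <= k c' + 2 k m, combining the two bounds above with
   c < w(r) + ((c - w(r)) / m + 1) m for every r. *)
Lemma conductor_le : c <= k * count S (iota 0 c) + 2 * k * m.
Proof.
have ap_le r : apery r <= c + m := ltnW (apery_lt r).
have last_gap r : c < apery r + (c - apery r) %/ m * m + m.
  have := divn_eq (c - apery r) m; have := ltn_pmod (c - apery r) mult_gt0; lia.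
have sum_gaps : m * c.+1 <=
    \sum_(r < m) apery r + (\sum_(r < m) (c - apery r) %/ m) * m + m * m.
  apply: (@leq_trans (\sum_(r < m) (apery r + (c - apery r) %/ m * m + m))).
    by rewrite -[X in X * _](card_ord m) -sum_nat_const; apply: leq_sum.
  by rewrite !big_split /= big_distrl /= sum_nat_const card_ord.
have sum_compl : \sum_(r < m) apery r + \sum_(r < m) (c + m - apery r) = m * (c + m).
  rewrite -big_split /= (eq_bigr (fun=> c + m)) ?sum_nat_const ?card_ord //.
  by move=> r _; rewrite subnKC.
have k_gt0 : 0 < k by rewrite (leq_ltn_trans _ (ltn_ord mult_idx)).
move: apery_sum_le apery_count_le sum_gaps sum_compl.
set A := \sum_(r < m) apery r; set T := \sum_(r < m) (c + m - apery r).
set J := \sum_(r < m) (c - apery r) %/ m; set cp := count S (iota 0 c).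
rewrite -(prednK k_gt0); move: (k.-1) => kk sumA sumJ sum_gaps sum_compl.
have h1 : kk.+1 * A <= kk * (m * (c + m)) by rewrite -sum_compl; nia.
have h2 : m * (kk.+1 * c.+1) <= m * (kk * (c + m) + kk.+1 * cp + kk.+1 * m) by nia.
rewrite leq_pmul2l ?mult_gt0 // in h2; nia.
Qed.

(* Every nonzero generator is at least m, so its coefficient is at most (c+m)/m. *)
Lemma rep_coeff_le r (l : 'I_k) :
  nth 0 G l != 0 -> nth 0 (rep r) l <= (c + m) %/ m.
Proof.
case: multP => m_gt0 _ m_min gl; rewrite leq_divRL //.
have le_ap : nth 0 (rep r) l * nth 0 G l <= apery r.
  by rewrite rep_sum (bigD1 l) //= leq_addr.
apply: leq_trans (ltnW (apery_lt r)); apply: leq_trans le_ap.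
by rewrite leq_mul2l m_min ?lt0n ?mem_nth ?orbT.
Qed.

(* Distinct residues have distinct Apery elements, hence distinct coefficient
   vectors; these lie in a box with ((c+m)/m + 1)^k points. *)
Lemma mult_le_pow : m <= ((c + m) %/ m).+1 ^ k.
Proof.
pose B := (c + m) %/ m.
pose trunc r (l : 'I_k) := if nth 0 G l == 0 then 0 else nth 0 (rep r) l.
have trunc_lt r l : trunc r l < B.+1.
  by rewrite /trunc ltnS; case: eqP => // /eqP; apply: rep_coeff_le.
pose f (r : 'I_m) := [ffun l : 'I_k => (inord (trunc r l) : 'I_B.+1)].
have f_inj : injective f.
  move=> r1 r2 /ffunP e; apply/ord_inj/apery_inj => //.
  rewrite !rep_sum; apply: eq_bigr => l _.
  have := congr1 val (e l); rewrite !ffunE /= !inordK ?trunc_lt // /trunc.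
  by case: eqP => [->|_ ->]; rewrite ?muln0.
by have := leq_card f f_inj; rewrite card_ffun !card_ord.
Qed.

End AperySet.

Fixpoint bool_seqs (n : nat) : list (list bool) :=
  if n is n'.+1 then
    (List.map (cons true) (bool_seqs n') ++ List.map (cons false) (bool_seqs n'))%list
  else [:: [::]].

Lemma bool_seqs_complete (bs : seq bool) : List.In bs (bool_seqs (size bs)).
Proof.
elim: bs => [|b bs IH] /=; first by left.
by apply: List.in_or_app; case: b; [left | right]; apply: List.in_map.
Qed.

(* Up to extensional equality there are finitely many subsets of N containing
   every n >= C: such a set is determined by its trace on [0, C). *)
Lemma cofinite_sets_finite (C : nat) :
  exists sets : list (nat -> bool), forall S : nat -> bool,
    (forall n, C <= n -> S n) -> exists T, List.In T sets /\ S =1 T.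
Proof.
pose extend (bs : seq bool) n := if n < C then nth false bs n else true.
exists (List.map extend (bool_seqs C)) => S S_ge_C.
exists (extend (mkseq S C)); split.
  by apply: List.in_map; have := bool_seqs_complete (mkseq S C); rewrite size_mkseq.
by move=> n; rewrite /extend; case: ltnP => [n_lt | /S_ge_C //]; rewrite nth_mkseq.
Qed.

Lemma mult_small (m k c L : nat) :
  0 < m -> L * L.+1 ^ k < c -> m <= ((c + m) %/ m).+1 ^ k -> L * m <= c.
Proof.
move=> m_gt0 c_big m_le; rewrite leqNgt; apply/negP => c_lt.
have quot_le : (c + m) %/ m <= L.
  by rewrite divnDr ?dvdnn // divnn m_gt0 addn1 ltn_divLR.
have : L * m <= L * L.+1 ^ k.
  rewrite leq_mul2l (leq_trans m_le) ?orbT //.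
  by case: k {c_big m_le} => // k; rewrite leq_exp2r // ltnS.
lia.
Qed.

(* The real-number conclusion: L c <= L k c' + 2 k c with 2/eps < L gives
   c'/c >= 1/k - 2/L > 1/k - eps. *)
Lemma ratio_lower_bound (k c cp L : nat) (eps : R) :
  0 < k -> 0 < c -> (0 < eps)%R -> (2 / eps < INR L)%R ->
  L * c <= L * k * cp + 2 * k * c ->
  (INR cp / INR c > 1 / INR k - eps)%R.
Proof.
move=> /ltP/lt_0_INR k_gt0 /ltP/lt_0_INR c_gt0 eps_gt0 L_big.
rewrite -!multE -!plusE => /leP/le_INR; rewrite !plus_INR !mult_INR /= => key.
have eps_L : (2 < eps * INR L)%R.
  have := Rmult_lt_compat_r eps _ _ eps_gt0 L_big.
  by rewrite /Rdiv Rmult_assoc Rinv_l; lra.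
set q := (INR cp / INR c)%R.
have cpE : INR cp = (q * INR c)%R by rewrite /q; field; lra.
rewrite cpE in key.
have key' : (INR L <= INR L * INR k * q + 2 * INR k)%R.
  by apply: (Rmult_le_reg_r (INR c)) => //; nra.
apply: Rlt_gt; apply: (Rmult_lt_reg_r (INR k)) => //.
have -> : ((1 / INR k - eps) * INR k = 1 - eps * INR k)%R by field; lra.
have L_gt0 : (0 < INR L)%R by apply: Rlt_trans L_big; apply: Rdiv_lt_0_compat; lra.
have : (INR L * (1 - eps * INR k - q * INR k) < 0)%R by nra.
nra.
Qed.

Theorem theorem2 (k : nat) (hk : 0 < k) (eps : R) (heps : (0 < eps)%R) :
  exists exceptions : list (nat -> bool),
    forall S : nat -> bool,
      numerical_semigroup S ->
      embedding_dimension_is S k ->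
      ~ (exists T, List.In T exceptions /\ S =1 T) ->
      forall c : nat, is_conductor S c ->
        0 < c /\
        (INR (cprime S c) / INR c > 1 / INR k - eps)%R.
Proof.
have [L L_big] := INR_unbounded (2 / eps).
(* The exceptions: the semigroups whose conductor is at most L (L + 1)^k. *)
have [small small_cover] := cofinite_sets_finite (L * L.+1 ^ k).
exists small => S [_ [S_add _]] [G [[_ [S_gen _]] size_G]] not_small c [S_ge_c _].
have c_big : L * L.+1 ^ k < c.
  rewrite ltnNge; apply/negP => c_le; apply/not_small/small_cover => n n_ge.
  exact/S_ge_c/(leq_trans c_le).
subst k.
have m_small := mult_small (mult_gt0 S_gen S_ge_c) c_big (mult_le_pow S_gen S_ge_c).
have c_le := conductor_le S_add S_gen S_ge_c.
have c_gt0 : 0 < c by apply: leq_ltn_trans c_big.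
split=> //; apply: (ratio_lower_bound hk c_gt0 heps L_big).
rewrite /cprime; nia.
Qed.
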